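(* Let $q$ and $n$ be positive integers with $q>\lceil n/2\rceil$, and let $a_1,\dots,a_n\in\mathbb{Z}_q$ be reduced residues (i.e. $\gcd(a_i,q)=1$ for all $i$). Then the number of the $2^n$ choices $(\varepsilon_1,\dots,\varepsilon_n)\in\{0,1\}^n$ for which $\sum_{i=1}^n\varepsilon_i a_i\equiv 0\pmod q$ is at most $\binom{n}{\lfloor n/2\rfloor}$. Moreover, this bound is best possible: for all such $q,n$ there exist reduced residues $a_1,\dots,a_n$ attaining it.
   Context: $\mathbb{Z}_q$ denotes the integers modulo $q$. *)

From mathcomp Require Import all_boot.
Set Implicit Arguments. Unset Strict Implicit. Unset Printing Implicit Defensive.

(* Elements of Z_q are represented by their canonical representatives in 'I_q.
   A choice (eps_1,...,eps_n) in {0,1}^n is a boolean finite function on 'I_n. *)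
Definition zero_sum_count (q n : nat) (a : 'I_n -> 'I_q) : nat :=
  #|[set e : {ffun 'I_n -> bool} | (\sum_(i < n) e i * a i) %% q == 0]|.

From mathcomp Require Import all_boot all_algebra zify.
Import GRing.Theory.
Set Implicit Arguments. Unset Strict Implicit. Unset Printing Implicit Defensive.

(* A splitting argument in the style of Kleitman's proof of Littlewood-Offord.
   After the residues indexed by J have been processed, the function
   t |-> #{E \subset J | sum_(i in E) a_i = t} is written as a sum of
   indicators 1_X of sets X \subset Z_q, each carrying a height h; the
   heights are the endpoints of the walks of length #|J| from 1 that stay
   positive, and there are C(#|J|, #|J|/2) of them.  Adding a unit b turns
   1_X into 1_X + 1_(X+b); moving a point x of X with x + b outside X gives
   1_(X u {x+b}) + 1_((X - {x}) + b), with heights h + 1 and h - 1.  The sets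
   keep |X| <= h, except X = Z_q, which needs h >= q and, since
   q > ceil(n/2), never returns to height 1 before the end; so at height 1
   the second set is empty and is dropped.  The zero sums are then at most
   the number of sets.  Equality holds for floor(n/2) residues 1 and the
   others -1: symmetric difference with the positions of the 1's maps the
   floor(n/2)-subsets injectively to zero-sum subsets. *)

Definition walk_step (h : nat) : seq nat :=
  h.+1 :: (if h <= 1 then [::] else [:: h.-1]).

Arguments walk_step : simpl never.

Fixpoint walk_ends (j : nat) : seq nat :=
  if j is j'.+1 then flatten (map walk_step (walk_ends j')) else [:: 1].

Lemma walk_ends_bounds j : all (fun h => 0 < h <= j.+1) (walk_ends j).
Proof.
elim: j => [|j IH] //=; apply/allP => x /flattenP [s /mapP [h hj ->]].
have /andP[h_gt0 h_le] := allP IH h hj.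
rewrite /walk_step; case: ifP => h_le1; rewrite !inE; first by move/eqP ->; lia.
by case/orP => /eqP ->; lia.
Qed.

Definition nends_gt j m := count (fun h => m < h) (walk_ends j).

Lemma nends_gt_eq0 j m : j < m -> nends_gt j m = 0.
Proof.
move=> lt_jm; apply/eqP; rewrite eqn0Ngt -has_count.
by apply/hasPn => h /(allP (walk_ends_bounds j)) /andP[_ h_le] /=; rewrite -leqNgt; lia.
Qed.

Lemma nends_gtS j m : nends_gt j.+1 m = nends_gt j m.-1 + nends_gt j m.+1.
Proof.
rewrite /nends_gt /=; have := walk_ends_bounds j.
elim: (walk_ends j) => //= h s IH /andP[/andP[h_gt0 _] /IH {}IH].
rewrite count_cat {}IH /walk_step.
by case: ifP => /= h_le1; case: m => [|[|m]] /=; lia.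
Qed.

Lemma nends_gt_binomial j m r (b : bool) : m + r.*2 + b = j -> nends_gt j m = 'C(j, r).
Proof.
elim: j m r b => [|j IH] m r b e.
  by have [-> ->] : m = 0 /\ r = 0 by lia.
rewrite nends_gtS; case: m e => [|m] e /=; last first.
  case: r e => [|r] e; first by rewrite (IH m 0 b) ?nends_gt_eq0 ?bin0 //; lia.
  by rewrite (IH m r.+1 b) ?(IH m.+2 r b) ?binS //; lia.
case: b e => e.
  case: r e => [|r] e; first by have -> : j = 0 by lia.
  by rewrite (IH 0 r.+1 false) ?(IH 1 r true) ?binS //; lia.
case: r e => [|r] e; first lia.
rewrite (IH 0 r true) ?(IH 1 r false) ?binS //; try lia.
have -> : r.+1 = j - r by lia.
by rewrite bin_sub //; lia.
Qed.

Lemma size_walk_ends n : size (walk_ends n) = 'C(n, n./2).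
Proof.
rewrite -(nends_gt_binomial (m := 0) (b := odd n)); last first.
  by rewrite add0n addnC odd_double_half.
rewrite /nends_gt -[LHS]count_predT; apply: eq_in_count => h hn.
by have /andP[] := allP (walk_ends_bounds n) h hn.
Qed.

Lemma Zp_unitE p (x : 'I_p.+2) : (x \is a GRing.unit) = coprime x p.+2.
Proof. by have := @unitZpE p.+2 x isT; rewrite natr_Zp coprime_sym. Qed.

Section Translates.
Variables (p : nat) (b : 'I_p.+2).
Local Open Scope ring_scope.

Definition translate (X : {set 'I_p.+2}) := [set x + b | x in X].

Lemma in_translate X t : (t \in translate X) = (t - b \in X).
Proof.
apply/imsetP/idP => [[x xX ->]|tX]; first by rewrite addrK.
by exists (t - b); rewrite ?subrK.
Qed.

Lemma card_translate X : #|translate X| = #|X|.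
Proof. exact/card_imset/addIr. Qed.

Hypothesis b_unit : b \is a GRing.unit.

Lemma translate_closed_setT X :
  X != set0 -> (forall x, x \in X -> x + b \in X) -> X = setT.
Proof.
move=> /set0Pn[y yX] X_closed; apply/setP=> z; rewrite inE.
have -> : z = y + b *+ val ((z - y) / b).
  by rewrite -mulr_natl natr_Zp mulrVK // addrC subrK.
elim: (val _) => [|m IH]; first by rewrite mulr0n addr0.
by rewrite mulrS addrCA addrC X_closed.
Qed.

(* [Y] is [x + b |: X] and [Z] is [translate (X :\ x)] for some [x \in X]
   with [x + b \notin X]; if there is no such [x], [X] is empty or full. *)
Lemma split_translate (X : {set 'I_p.+2}) : exists Y Z : {set 'I_p.+2},
  [/\ forall t, ((t \in Y) + (t \in Z) = (t \in X) + (t \in translate X))%N,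
      (#|Y| <= #|X|.+1)%N
    & (#|Z| <= #|X|.-1)%N \/ X = setT].
Proof.
have [x /andP[xX xbX]|X_closed] := pickP [pred x in X | x + b \notin X].
  exists (x + b |: X), (translate (X :\ x)); split.
  - move=> t; rewrite !in_translate !inE.
    case: (eqVneq t (x + b)) => [->|t_neq]; first by rewrite addrK eqxx xX (negbTE xbX).
    by rewrite (_ : t - b == x = false) //; apply: contraNF t_neq => /eqP <-; rewrite subrK.
  - by rewrite cardsU1; case: (_ \notin _).
  - by left; rewrite card_translate (cardsD1 x X) xX.
exists X, (translate X); split=> //; rewrite card_translate.
have [->|X_neq0] := eqVneq X set0; first by left; rewrite cards0.
right; apply: translate_closed_setT X_neq0 _ => x xX.
by move: (X_closed x); rewrite /= xX /= => /negbFE.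
Qed.

End Translates.

Section SubsetSums.
Variables (p n : nat) (a : 'I_n -> 'I_p.+2).
Local Open Scope ring_scope.

Definition subsets_with_sum (J : {set 'I_n}) (t : 'I_p.+2) : {set {set 'I_n}} :=
  [set E : {set 'I_n} | (E \subset J) && (\sum_(i in E) a i == t)].

Lemma card_subsets_with_sum0 t : #|subsets_with_sum set0 t| = (t == 0).
Proof.
have -> : subsets_with_sum set0 t = [set E | (E == set0) && (t == 0)].
  by apply/setP=> E; rewrite !inE subset0; case: eqP => // ->; rewrite big_set0 eq_sym.
case: (t == 0) => /=; last by apply: eq_card0 => E; rewrite !inE andbF.
by rewrite -(cards1 (set0 : {set 'I_n})); apply: eq_card => E; rewrite !inE andbT.
Qed.

Lemma subsets_with_sumU1 (J : {set 'I_n}) k t : k \notin J ->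
  subsets_with_sum (k |: J) t =
  subsets_with_sum J t :|: [set k |: E | E in subsets_with_sum J (t - a k)].
Proof.
move=> kNJ; apply/setP=> E; rewrite !inE; apply/idP/orP.
- case/andP=> EkJ /eqP <-; have [kE|kNE] := boolP (k \in E).
    right; apply/imsetP; exists (E :\ k); last by rewrite setD1K.
    rewrite inE (big_setD1 k kE) addrC addKr eqxx andbT.
    by rewrite -(setU1K kNJ) setSD.
  left; rewrite eqxx andbT; apply/subsetP=> i iE.
  by move/subsetP/(_ i iE): EkJ; rewrite !inE => /predU1P[ik|//]; rewrite -ik iE in kNE.
- case=> [/andP[EJ ->]|/imsetP[F]]; first by rewrite (subset_trans EJ) ?subsetUr.
  rewrite inE => /andP[FJ /eqP sumF] ->.
  have kNF : k \notin F by apply: contra kNJ; apply: (subsetP FJ).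
  by rewrite setUS // (big_setU1 _ kNF) /= sumF addrC subrK eqxx.
Qed.

Lemma card_subsets_with_sumU1 (J : {set 'I_n}) k t : k \notin J ->
  #|subsets_with_sum (k |: J) t| =
  (#|subsets_with_sum J t| + #|subsets_with_sum J (t - a k)%R|)%N.
Proof.
move=> kNJ; have kNS E : E \in subsets_with_sum J (t - a k) -> k \notin E.
  by rewrite inE => /andP[/subsetP EJ _]; apply: contra kNJ => /EJ.
rewrite subsets_with_sumU1 // cardsU card_in_imset; last first.
  by move=> E F /kNS kNE /kNS kNF /= EF; rewrite -(setU1K kNE) EF setU1K.
rewrite (_ : _ :&: _ = set0) ?cards0 ?subn0 //; apply/setP=> E; rewrite !inE.
apply/andP=> -[/andP[/subsetP EJ _] /imsetP[F _ EkF]].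
by move: kNJ; rewrite EJ // EkF setU11.
Qed.

Lemma zero_sum_count_subsets : zero_sum_count a = #|subsets_with_sum setT 0|.
Proof.
have set_of_ffun_bij : bijective (fun e : {ffun 'I_n -> bool} => [set i | e i]).
  exists (fun E : {set 'I_n} => [ffun i => i \in E]) => [e|E].
    by apply/ffunP=> i; rewrite ffunE inE.
  by apply/setP=> i; rewrite inE ffunE.
rewrite /zero_sum_count -(on_card_preimset (onW_bij _ set_of_ffun_bij)).
apply: eq_card => e; rewrite !inE subsetT /= -val_Zp_nat // -val_eqE /= natr_sum.
congr (nat_of_ord _ == _); rewrite [RHS]big_mkcond; apply: eq_bigr => i _.
by rewrite inE; case: (e i); rewrite ?mul1n ?natr_Zp.
Qed.

End SubsetSums.

Section Decomposition.
Variables (p n : nat).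
Hypothesis n_small : uphalf n < p.+2.

(* At stage [j], a set of height [h] has at most [h] elements, or [h] exceeds
   the number [n - j] of remaining steps, so it is never split at height 1. *)
Definition admissible (j h : nat) (X : {set 'I_p.+2}) : bool :=
  (#|X| <= h) || (n - j < h).

Lemma admissible_split j b h X : b \is a GRing.unit -> j < n -> 0 < h <= j.+1 ->
  admissible j h X -> exists L : seq (nat * {set 'I_p.+2}),
  [/\ map fst L = walk_step h, all (fun c => admissible j.+1 c.1 c.2) L
    & forall t, \sum_(c <- L) (t \in c.2) = (t \in X) + ((t - b)%R \in X)].
Proof.
move=> b_unit lt_jn /andP[h_gt0 h_le] /orP X_adm.
have [Y [Z [YZ_sum le_Y le_Z]]] := split_translate b_unit X.
have cardT : #|[set: 'I_p.+2]| = p.+2 by rewrite cardsT card_ord.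
have := n_small; rewrite ltn_uphalf_double => lt_n_2q.
rewrite /walk_step; case: ifP => h_le1.
  have Z0 : Z = set0.
    apply/eqP; rewrite -cards_eq0 -leqn0.
    by case: le_Z => [le_Z|X_full]; [|rewrite X_full cardT in X_adm]; lia.
  exists [:: (h.+1, Y)]; split=> //=; last first.
    by move=> t; rewrite big_seq1 -in_translate -YZ_sum Z0 inE addn0.
  by rewrite andbT; apply/orP; lia.
exists [:: (h.+1, Y); (h.-1, Z)]; split=> //=; last first.
  by move=> t; rewrite big_cons big_seq1 -in_translate -YZ_sum.
rewrite andbT; apply/andP; split; apply/orP; first lia.
by case: le_Z => [le_Z|X_full]; [|rewrite X_full cardT in X_adm]; lia.
Qed.

Lemma admissible_split_seq j b (L : seq (nat * {set 'I_p.+2})) :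
  b \is a GRing.unit -> j < n -> all (fun c => 0 < c.1 <= j.+1) L ->
  all (fun c => admissible j c.1 c.2) L -> exists L' : seq (nat * {set 'I_p.+2}),
  [/\ map fst L' = flatten (map walk_step (map fst L)),
       all (fun c => admissible j.+1 c.1 c.2) L'
     & forall t, \sum_(c <- L') (t \in c.2) =
                 \sum_(c <- L) ((t \in c.2) + ((t - b)%R \in c.2))].
Proof.
move=> b_unit lt_jn; elim: L => [|[h X] L IH] /=.
  by move=> _ _; exists [::]; split=> // t; rewrite !big_nil.
move=> /andP[h_bd /IH{}IH] /andP[X_adm /IH[L' [fst_L' adm_L' sum_L']]].
have [L1 [fst_L1 adm_L1 sum_L1]] := admissible_split b_unit lt_jn h_bd X_adm.
exists (L1 ++ L'); split; first by rewrite map_cat fst_L1 fst_L'.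
  by rewrite all_cat adm_L1.
by move=> t; rewrite big_cat big_cons /= sum_L1 sum_L'.
Qed.

Variable a : 'I_n -> 'I_p.+2.
Hypothesis a_unit : forall i, a i \is a GRing.unit.

Lemma subsets_with_sum_decomposition (J : {set 'I_n}) :
  exists L : seq (nat * {set 'I_p.+2}),
  [/\ map fst L = walk_ends #|J|, all (fun c => admissible #|J| c.1 c.2) L
     & forall t, #|subsets_with_sum a J t| = \sum_(c <- L) (t \in c.2)].
Proof.
move: {2}#|J| (erefl #|J|) => j; elim: j J => [|j IH] J card_J.
  exists [:: (1, [set 0%R])]; rewrite card_J; split=> //=.
    by rewrite /admissible cards1.
  move: card_J => /eqP; rewrite cards_eq0 => /eqP -> t.
  by rewrite big_seq1 card_subsets_with_sum0 inE.
have [k kJ] : exists k, k \in J by apply/set0Pn; rewrite -cards_eq0 card_J.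
have card_Jk : #|J :\ k| = j by move: (cardsD1 k J); rewrite kJ card_J => -[].
have lt_jn : j < n by rewrite -card_J; apply: leq_trans (max_card _) _; rewrite card_ord.
have [L [fst_L adm_L sum_L]] := IH _ card_Jk; rewrite card_Jk in fst_L adm_L.
have L_bd : all (fun c => 0 < c.1 <= j.+1) L.
  by move: (walk_ends_bounds j); rewrite -fst_L all_map.
have [L' [fst_L' adm_L' sum_L']] := admissible_split_seq (a_unit k) lt_jn L_bd adm_L.
exists L'; rewrite card_J; split=> //; first by rewrite fst_L' fst_L.
move=> t; rewrite -(setD1K kJ) card_subsets_with_sumU1 ?setD11 //.
by rewrite !sum_L sum_L' big_split.
Qed.

Lemma zero_sum_count_le : zero_sum_count a <= 'C(n, n./2).
Proof.
have [L [fst_L _ sum_L]] := subsets_with_sum_decomposition setT.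
rewrite cardsT card_ord in fst_L.
rewrite zero_sum_count_subsets sum_L -size_walk_ends -fst_L size_map -sum1_size.
by apply: leq_sum => c _; apply: leq_b1.
Qed.

End Decomposition.

Lemma card_ord_lt m n : m <= n -> #|[set i : 'I_n | i < m]| = m.
Proof.
move=> le_mn; rewrite -sum1_card (eq_bigl (fun i : 'I_n => i < m)) => [|i].
  by rewrite (big_ord_narrow le_mn) sum1_card card_ord.
by rewrite inE.
Qed.

Section Balanced.
Variables p n : nat.
Local Open Scope ring_scope.

Definition balanced_residues : 'I_n -> 'I_p.+2 := fun i => if (i < n./2)%N then 1 else -1.

Lemma balanced_residues_unit i : balanced_residues i \is a GRing.unit.
Proof. by rewrite /balanced_residues; case: ifP => _; rewrite ?unitr1 ?unitrN1. Qed.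

Lemma zero_sum_count_balanced : ('C(n, n./2) <= zero_sum_count balanced_residues)%N.
Proof.
pose L := [set i : 'I_n | (i < n./2)%N].
have card_L : #|L| = n./2 by rewrite card_ord_lt // leq_half_double -addnn; lia.
pose symL T := (T :\: L) :|: (L :\: T).
have symL_L T : symL T :&: L = L :\: T.
  by apply/setP=> i; rewrite !inE; case: (i \in T); case: (i < n./2)%N.
have symL_NL T : symL T :\: L = T :\: L.
  by apply/setP=> i; rewrite !inE; case: (i \in T); case: (i < n./2)%N.
have symLK : involutive symL.
  by move=> T; apply/setP=> i; rewrite !inE; case: (i \in T); case: (i < n./2)%N.
rewrite zero_sum_count_subsets -card_L -[n in 'C(n, _)]card_ord -card_draws.
rewrite -(card_imset _ (inv_inj symLK)); apply/subset_leq_card/subsetP => E /imsetP[T].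
rewrite inE => /eqP card_T ->{E}; rewrite inE subsetT (big_setID L) /= symL_L symL_NL.
rewrite (eq_bigr (fun=> 1)) => [|i]; last by rewrite !inE /balanced_residues => /andP[_ ->].
rewrite [X in _ + X](eq_bigr (fun=> -1)) => [|i]; last first.
  by rewrite !inE /balanced_residues => /andP[/negbTE ->].
by rewrite !sumr_const !cardsD card_T setIC mulNrn addrN.
Qed.

End Balanced.

Theorem corollary1 (q n : nat) (hq : 0 < q) (hn : 0 < n) (hqn : uphalf n < q) :
  (forall a : 'I_n -> 'I_q, (forall i, coprime (a i) q) ->
     zero_sum_count a <= 'C(n, n./2))
  /\ (exists a : 'I_n -> 'I_q, (forall i, coprime (a i) q) /\
        zero_sum_count a = 'C(n, n./2)).
Proof.
case: q hq hqn => [|[|p]] // _ hqn; first by case: n hn hqn.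
have upper (a : 'I_n -> 'I_p.+2) : (forall i, coprime (a i) p.+2) ->
    zero_sum_count a <= 'C(n, n./2).
  by move=> a_coprime; apply: zero_sum_count_le => // i; rewrite Zp_unitE.
have balanced_coprime i : coprime (@balanced_residues p n i) p.+2.
  by rewrite -Zp_unitE balanced_residues_unit.
split=> //; exists (@balanced_residues p n); split=> //.
by apply/eqP; rewrite eqn_leq upper ?zero_sum_count_balanced.
Qed.
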